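(* Let $G$ be a closed graph on a compact metrizable space $X$. If $\mathfrak{b}<\kappa(G)$, then the poset $P_G$ adds no dominating reals (i.e. no condition of $P_G$ forces some element of $\omega^\omega$ to dominate modulo finite all ground model elements of $\omega^\omega$).
   Context: A graph $G$ on $X$ is a symmetric irreflexive relation; it is closed if it is closed in $(X\times X)\setminus$ diagonal. A $G$-anticlique is a set with no two distinct $G$-connected points. $\kappa(G)$ is the minimum cardinality of a subset of $X$ not covered by countably many compact $G$-anticliques ($\infty$ if $X$ is so covered). $\mathfrak{b}$ is the minimum cardinality of a subset of $\omega^\omega$ unbounded in the modulo-finite domination order. The poset $P_G$ consists of all pairs $p=\langle a_p,o_p\rangle$ where $a_p\subset X$ is a finite $G$-anticlique and $o_p\subset X$ is open with $a_p\subset o_p$; $q\leq p$ iff $a_p\subset a_q$ and $o_q\subset o_p$. *)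

From HB Require Import structures.
From mathcomp Require Import all_boot all_algebra.
From mathcomp Require Import all_classical all_reals all_analysis.
Set Implicit Arguments. Unset Strict Implicit. Unset Printing Implicit Defensive.
Local Open Scope classical_set_scope.

Section Graphs.
Variable X : topologicalType.

Definition is_graph (G : X -> X -> Prop) :=
  (forall x y, G x y -> G y x) /\ (forall x, ~ G x x).

(* closed in (X x X) minus the diagonal *)
Definition closed_graph (G : X -> X -> Prop) :=
  closure [set p : X * X | G p.1 p.2] `&` [set p : X * X | p.1 <> p.2]
    `<=` [set p : X * X | G p.1 p.2].

Definition anticlique (G : X -> X -> Prop) (A : set X) :=
  forall x y, A x -> A y -> x <> y -> ~ G x y.

Definition sigma_compact_anticlique_covered (G : X -> X -> Prop) (A : set X) :=
  exists C : nat -> set X,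
    (forall n, compact (C n) /\ anticlique G (C n)) /\
    A `<=` \bigcup_n C n.
End Graphs.

Definition le_star (f g : nat -> nat) := exists n, forall m, (n <= m)%N -> (f m <= g m)%N.
Definition unbounded_family (B : set (nat -> nat)) :=
  ~ exists g : nat -> nat, forall f, B f -> le_star f g.

(* b < kappa(G): some unbounded family B (hence one of size b) such that every
   subset of X of cardinality <= |B| is covered by countably many compact
   G-anticliques. *)
Definition b_lt_kappa (X : topologicalType) (G : X -> X -> Prop) :=
  exists B : set (nat -> nat), unbounded_family B /\
    forall A : set X, card_le A B -> sigma_compact_anticlique_covered G A.

Section Forcing.
Variables (T : Type) (P : T -> Prop) (le : T -> T -> Prop).

Definition dense_below (D : T -> Prop) (p : T) :=
  forall q, P q -> le q p -> exists r, P r /\ le r q /\ D r.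

(* R n k p  reads  "p forces  xdot(n) = k" *)
Definition real_name (R : nat -> nat -> T -> Prop) :=
  (forall n k p q, R n k p -> P q -> le q p -> R n k q) /\
  (forall n k j p q r, P p -> P q -> R n k p -> R n j q ->
       P r -> le r p -> le r q -> k = j) /\
  (forall n p, P p -> dense_below (fun q => P q /\ exists k, R n k q) p).

(* q forces  y(m) <= xdot(m) *)
Definition forces_le (R : nat -> nat -> T -> Prop) (y : nat -> nat) m q :=
  dense_below (fun r => exists k, R m k r /\ (y m <= k)%N) q.

(* p forces that xdot dominates mod finite every ground model real *)
Definition forces_dominating (R : nat -> nat -> T -> Prop) (p : T) :=
  forall y : nat -> nat,
    dense_below (fun q => exists n, forall m, (n <= m)%N -> forces_le R y m q) p.

Definition adds_no_dominating_reals :=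
  ~ exists R, real_name R /\ exists p, P p /\ forces_dominating R p.
End Forcing.

Section PG.
Variables (X : topologicalType) (G : X -> X -> Prop).
Definition PG_cond (c : set X * set X) :=
  finite_set c.1 /\ anticlique G c.1 /\ open c.2 /\ c.1 `<=` c.2.
Definition PG_le (q p : set X * set X) := p.1 `<=` q.1 /\ q.2 `<=` p.2.
End PG.

(* Suppose p forces that a name ẋ dominates the ground-model reals, and let B
   be an unbounded family such that every set of size at most |B| is covered
   by countably many compact G-anticliques.  For y in B choose q_y and N_y
   such that q_y forces y <= ẋ above N_y.  For each i the i-th points of the
   anticliques a_{q_y} form a set of size at most |B|, hence lie in countably
   many compact anticliques; with finite covers of X by small balls this
   gives each y one of countably many codes.  For a fixed code the points of
   a_{q_y} range over a fixed compact product of pairwise non-adjacent compact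
   anticliques, so compactness yields, for each m, one bound on the values of
   ẋ(m) decided by conditions compatible with every such q_y.  Hence each
   code class of B is bounded, and diagonalising over the codes bounds B. *)

From mathcomp Require Import all_boot all_order all_algebra.
From mathcomp Require Import all_classical all_reals all_analysis.
From mathcomp Require Import lra.
Import ArrowAsProduct.
Import Order.TTheory Num.Theory.
Set Implicit Arguments. Unset Strict Implicit. Unset Printing Implicit Defensive.
Local Open Scope classical_set_scope.

Lemma filter_forall_finite {T} {I : choiceType} (F : set_system T) {FF : Filter F}
    (D : set I) (P : I -> T -> Prop) :
  finite_set D -> (forall i, D i -> F (P i)) -> F (fun t => forall i, D i -> P i t).
Proof.
move=> /finite_fsetP[D' ->] FP.
by apply: filterS (filter_bigI FF FP) => t Pt i /Pt.
Qed.

Lemma exists_seq_nth {A : Type} (a0 : A) (j : nat) (P : nat -> A -> Prop) :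
  (forall i, (i < j)%N -> exists a, P i a) ->
  exists2 l : seq A, size l = j & forall i, (i < j)%N -> P i (nth a0 l i).
Proof.
move=> PA; have /choice[f fP] : forall i, exists a, (i < j)%N -> P i a.
  by move=> i; case: (ltnP i j) => [/PA[a Pa]|_]; [exists a|exists a0].
by exists (mkseq f j) => [|i ij]; rewrite ?size_mkseq // nth_mkseq //; exact: fP.
Qed.

Lemma range_nth {T : eqType} (x0 : T) (s : seq T) (j : nat) : size s = j ->
  range (fun i : 'I_j => nth x0 s i) = [set` s].
Proof.
move=> sj; apply/seteqP; split => [_ [i _ <-]|x /= xs] /=.
  by rewrite mem_nth // sj.
have xj : (index x s < j)%N by rewrite -sj index_mem.
by exists (Ordinal xj) => //=; rewrite nth_index.
Qed.

Lemma injective_nth {T : eqType} (x0 : T) (s : seq T) (j : nat) :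
  uniq s -> size s = j -> injective (fun i : 'I_j => nth x0 s i).
Proof.
move=> us sj i i' /eqP; rewrite nth_uniq ?sj // => /eqP; exact: val_inj.
Qed.

Lemma le_star_bounded_countable_union (K : countType) (B : set (nat -> nat))
    (fits : (nat -> nat) -> K -> Prop) :
  (forall y, B y -> exists c, fits y c) ->
  (forall c, exists g, forall y, fits y c -> le_star y g) ->
  exists g, forall y, B y -> le_star y g.
Proof.
move=> Bfits /choice[g gP].
pose h m := \max_(k < m.+1) (if unpickle k is Some c then g c m else 0%N).
exists h => y /Bfits[c yc]; have [n ygn] := gP c y yc.
exists (maxn n (pickle c)) => m; rewrite geq_max => /andP[nm cm].
apply: leq_trans (ygn m nm) _.
have := @leq_bigmax _ (fun k : 'I_m.+1 =>
  if unpickle k is Some c then g c m else 0%N) (Ordinal (cm : (pickle c < m.+1)%N)).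
by rewrite /= pickleK.
Qed.

Section BallFacts.
Local Open Scope ring_scope.
Variables (R : realType) (X : pseudoMetricType R).

Lemma closed_ball_sub_interior (c : X) (r : R) : 0 < r ->
  closed_ball c r `<=` interior (ball c (r + r)).
Proof.
move=> r0 u cu; have r2 : 0 < r / 2 by lra.
have [v [bcv buv]] := cu _ (nbhsx_ballx u (r / 2) r2).
apply: filterS (nbhsx_ballx u (r / 2) r2) => w buw.
have -> : r + r = r + (r / 2 + r / 2) by lra.
exact: ball_triangle bcv (ball_triangle (ball_sym buv) buw).
Qed.

Lemma compact_finite_ball_cover (r : R) : 0 < r -> compact [set: X] ->
  exists cs : seq X, forall x, exists2 c, c \in cs & ball c r x.
Proof.
move=> r0 cpt; apply: contrapT => nocover.
pose B (cs : seq X) := [set x | forall c, c \in cs -> ~ ball c r x].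
have FB : ProperFilter (filter_from [set: seq X] B).
  apply: filter_from_proper; last first.
    move=> cs _; apply: contrapT => B0; apply: nocover; exists cs => x.
    by apply: contrapT => xB; apply: B0; exists x => c cs_c bcx; apply: xB; exists c.
  apply: filter_fromT_filter; first by exists [::].
  by move=> s1 s2; exists (s1 ++ s2) => x Bx; split => c cs; apply: Bx;
    rewrite mem_cat cs ?orbT.
have [x [_ clx]] := cpt _ FB filterT.
have [w [Bw bxw]] := clx _ _ (ex_intro2 _ _ [:: x] I (@subset_refl _ _))
  (nbhsx_ballx x r r0).
by apply: (Bw x) => //; rewrite mem_head.
Qed.

End BallFacts.

Section NonEdges.
Local Open Scope ring_scope.
Variables (R : realType) (X : pseudoMetricType R) (G : X -> X -> Prop).
Hypothesis Gcl : closed_graph G.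

Lemma closed_graph_nonedge_balls (w v : X) : w <> v -> ~ G w v ->
  exists2 e : R, 0 < e & forall u u', ball w e u -> ball v e u' -> ~ G u u'.
Proof.
move=> wv nGwv.
have ncl : ~ closure [set p : X * X | G p.1 p.2] (w, v).
  by move=> cl; apply: nGwv; exact: (Gcl (conj cl wv)).
have [U nU UnG] : exists2 U, nbhs (w, v) U & forall p, ~ (G p.1 p.2 /\ U p).
  apply: contrapT => hU; apply: ncl => U nU; apply: contrapT => UG; apply: hU.
  by exists U => // p Gp; apply: UG; exists p.
move: nU => /nbhs_ballP[e e0 eU]; exists e => // u u' bu bu' Guu'.
by apply: (UnG (u, u')); split => //; apply: eU.
Qed.

End NonEdges.

Section Conditions.
Variables (X : topologicalType) (G : X -> X -> Prop).

Lemma PG_le_refl (c : set X * set X) : PG_le c c.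
Proof. by split. Qed.

Lemma PG_le_trans (a b c : set X * set X) : PG_le a b -> PG_le b c -> PG_le a c.
Proof.
by move=> [ab1 ab2] [bc1 bc2]; split; [exact: subset_trans bc1 ab1|exact: subset_trans ab2 bc2].
Qed.

Definition compatible_with (a : set X) (d : set X * set X) :=
  a `<=` d.2 /\ anticlique G (d.1 `|` a).

Lemma PG_amalgamate (d q : set X * set X) : PG_cond G d -> PG_cond G q ->
  compatible_with q.1 d -> d.1 `<=` q.2 ->
  exists e, PG_cond G e /\ PG_le e d /\ PG_le e q.
Proof.
move=> [dfin [_ [dopen d12]]] [qfin [_ [qopen q12]]] [qd anti] dq.
exists (d.1 `|` q.1, d.2 `&` q.2); split; last first.
  by do 2!split; [exact: subsetUl|exact: subIsetl|exact: subsetUr|exact: subIsetr].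
split; first by rewrite finite_setU.
split; first exact: anti.
split; first exact: openI.
by move=> x [xd|xq]; split; [exact: d12|exact: dq|exact: qd|exact: q12].
Qed.

Lemma forces_le_decided (Rn : nat -> nat -> set X * set X -> Prop) y m k q1 q2 r :
  real_name (PG_cond G) (@PG_le X) Rn -> PG_cond G r -> PG_le r q1 -> PG_le r q2 ->
  Rn m k q1 -> forces_le (PG_cond G) (@PG_le X) Rn y m q2 -> (y m <= k)%N.
Proof.
move=> [Rmono [Runiq _]] Pr rq1 rq2 Rk q2y.
have [r' [Pr' [r'r [k' [Rk' yk']]]]] := q2y r Pr rq2.
have Rkr' : Rn m k r' := Rmono _ _ _ _ Rk Pr' (PG_le_trans r'r rq1).
by rewrite (Runiq _ _ _ _ _ _ Pr' Pr' Rkr' Rk' Pr' (PG_le_refl _) (PG_le_refl _)).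
Qed.

End Conditions.

Section Skeleton.
Variables (R : realType) (X : pseudoMetricType R) (G : X -> X -> Prop).
Hypotheses (Gsym : forall x y, G x y -> G y x) (Girr : forall x, ~ G x x)
  (Gcl : closed_graph G).

Lemma compatible_near_point (d : set X * set X) (K : set X) (x : X) :
  PG_cond G d -> d.1 x -> K x -> anticlique G K ->
  \forall x' \near x, K x' -> d.2 x' /\ (forall w, d.1 w -> ~ G w x').
Proof.
move=> [dfin [danti [dopen d12]]] dx Kx Kanti.
have near_o : \forall x' \near x, d.2 x'.
  by apply: open_nbhs_nbhs; split => //; exact: d12.
have near_nonadj : \forall x' \near x, forall w, d.1 w -> K x' -> ~ G w x'.
  apply: filter_forall_finite dfin _ => w dw.
  have [->|wx] := pselect (w = x).
    apply: nearW => x' Kx'; have [<-|xx'] := pselect (x = x'); first exact: Girr.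
    exact: Kanti.
  have [e e0 eG] := closed_graph_nonedge_balls Gcl wx (danti _ _ dw dx wx).
  by apply: filterS (nbhsx_ballx x e e0) => x' xx' _; apply: eG xx'; exact: ballxx.
by apply: filterS2 near_o near_nonadj => x' ox' nadj Kx'; split => // w /nadj; apply.
Qed.

Variables (j : nat) (L : 'I_j -> set X) (V : set X).
Hypotheses (Lcompact : forall i, compact (L i)) (Lanti : forall i, anticlique G (L i))
  (Lsep : forall i i', i != i' -> forall u v, L i u -> L i' v -> ~ G u v)
  (Vopen : open V) (LV : forall i, L i `<=` V).

Let S := [set z : 'I_j -> X | forall i, L i (z i)].

Lemma range_anticlique (z : 'I_j -> X) : S z -> anticlique G (range z).
Proof.
move=> Sz _ _ [i _ <-] [i' _ <-] zz'.
have [ii'|ii'] := eqVneq i i'; first by move: zz'; rewrite ii'.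
exact: Lsep ii' _ _ (Sz i) (Sz i').
Qed.

Lemma compatible_near_tuple (d : set X * set X) (z : 'I_j -> X) :
  PG_cond G d -> range z `<=` d.1 -> S z ->
  \forall z' \near z, S z' -> compatible_with G (range z') d.
Proof.
move=> Pd zd Sz.
have near_i : \forall z' \near z, forall i,
    L i (z' i) -> d.2 (z' i) /\ (forall w, d.1 w -> ~ G w (z' i)).
  apply: (@filter_forall _ _ _ (nbhs z)) => i.
  have near_zi := compatible_near_point Pd (zd _ (imageT z i)) (Sz i) (@Lanti i).
  exact: (@proj_continuous _ (fun _ => X) i z _ near_zi).
apply: filterS near_i => z' zi Sz'; split; first by move=> _ [i _ <-]; case: (zi i (Sz' i)).
move=> u v [du|[i _ <-]] [dv|[i' _ <-]] uv.
- by case: Pd => _ [+ _]; apply.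
- by case: (zi i' (Sz' i')) => _; apply.
- by move=> /Gsym; case: (zi i (Sz' i)) => _; apply.
- exact: range_anticlique Sz' _ _ (imageT _ _) (imageT _ _) uv.
Qed.

Lemma decide_uniformly (Rn : nat -> nat -> set X * set X -> Prop) (m : nat) :
  real_name (PG_cond G) (@PG_le X) Rn ->
  exists k, forall z, S z -> exists d, PG_cond G d /\
    (exists2 k', (k' <= k)%N & Rn m k' d) /\ d.1 `<=` V /\ compatible_with G (range z) d.
Proof.
move=> [_ [_ Rdense]].
have cond_z z : S z -> PG_cond G (range z, V).
  move=> Sz; split; first exact: finite_image.
  split; first exact: range_anticlique.
  by split => // _ [i _ <-]; exact: LV (Sz i).
suff [k0 _ Hk] : \forall k \near \oo, S `<=` fun z => exists d, PG_cond G d /\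
    (exists2 k', (k' <= k)%N & Rn m k' d) /\ d.1 `<=` V /\ compatible_with G (range z) d.
  by exists k0 => z /(Hk k0 (leqnn k0)).
have /compact_near_coveringP/near_covering_withinP : compact S := tychonoff Lcompact.
apply => z Sz.
have [d [Pd [[zd dV] [_ [k0 Rd]]]]] :=
  Rdense m _ (cond_z z Sz) _ (cond_z z Sz) (PG_le_refl _).
near=> z' k.
have z'd : S z' -> compatible_with G (range z') d.
  by near: z'; exact: compatible_near_tuple.
have k0k : (k0 <= k)%N by near: k; exists k0.
move=> Sz'; exists d; split => //; split; first by exists k0.
by split; [move=> x /(Pd.2.2.2) /dV | exact: z'd].
Unshelve. all: by end_near.
Qed.

End Skeleton.

Section Spread.
Local Open Scope ring_scope.
Variables (R : realType) (X : pseudoMetricType R) (G : X -> X -> Prop).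
Hypothesis Gcl : closed_graph G.

Definition spread (e : R) (a o : set X) :=
  (forall x, a x -> ball x e `<=` o) /\
  (forall x, a x -> forall x', a x' -> x <> x' ->
     forall u u', ball x e u -> ball x' e u' -> ~ G u u').

Lemma PG_cond_spread (q : set X * set X) : PG_cond G q ->
  \forall n \near \oo, spread n.+1%:R^-1 q.1 q.2.
Proof.
move=> [qfin [qanti [qopen q12]]].
have small_radius (e : R) : 0 < e ->
    \forall n \near \oo, forall x : X, ball x n.+1%:R^-1 `<=` ball x e.
  move=> e0; apply: filterS (near_infty_natSinv_lt (PosNum e0)) => n /ltW ne x.
  exact: le_ball.
have balls_inside : \forall n \near \oo,
    forall x, q.1 x -> ball x n.+1%:R^-1 `<=` q.2.
  apply: (filter_forall_finite (F := nbhs \oo) qfin) => x qx.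
  have /nbhs_ballP[e e0 eo] : nbhs x q.2.
    by apply: open_nbhs_nbhs; split => //; exact: q12.
  by apply: filterS (small_radius e e0) => n ne; apply: subset_trans (ne x) eo.
have balls_nonadjacent : \forall n \near \oo,
    forall x, q.1 x -> forall x', q.1 x' -> x <> x' ->
    forall u u', ball x n.+1%:R^-1 u -> ball x' n.+1%:R^-1 u' -> ~ G u u'.
  apply: (filter_forall_finite (F := nbhs \oo) qfin) => x qx.
  apply: (filter_forall_finite (F := nbhs \oo) qfin) => x' qx'.
  have [<-|xx'] := pselect (x = x'); first by exists 0%N => // n _ /(_ erefl).
  have [e e0 eG] := closed_graph_nonedge_balls Gcl xx' (qanti _ _ qx qx' xx').
  by apply: filterS (small_radius e e0) => n ne _ u u' /ne xu /ne x'u'; exact: eG.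
by apply: filterS2 balls_inside balls_nonadjacent => n; split.
Qed.

End Spread.

Section SkeletonBound.
Local Open Scope ring_scope.
Variables (R : realType) (X : pseudoMetricType R) (G : X -> X -> Prop).
Hypotheses (Gsym : forall x y, G x y -> G y x) (Girr : forall x, ~ G x x)
  (Gcl : closed_graph G).
Variables (e : R) (j : nat) (c : 'I_j -> X) (C : 'I_j -> set X).
Hypotheses (e0 : 0 < e) (Ccompact : forall i, compact (C i))
  (Canti : forall i, anticlique G (C i)).

Definition fits_skeleton (z : 'I_j -> X) (q : set X * set X) :=
  [/\ PG_cond G q, q.1 = range z, injective z, spread G e q.1 q.2 &
      forall i, C i (z i) /\ ball (c i) (e / 3) (z i)].

Let piece i := C i `&` closed_ball (c i) (e / 3).
Let core i := interior (ball (c i) (e / 3 + e / 3)).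
Let V := \bigcup_i core i.

Lemma piece_compact i : compact (piece i).
Proof. by apply: compact_closedI; [exact: Ccompact|exact: closed_ball_closed]. Qed.

Lemma piece_anticlique i : anticlique G (piece i).
Proof. by move=> u v [Cu _] [Cv _]; exact: Canti Cu Cv. Qed.

Lemma piece_sub_core i : piece i `<=` core i.
Proof. by move=> u [_]; apply: closed_ball_sub_interior; rewrite divr_gt0. Qed.

Lemma fits_core_ball z q i : fits_skeleton z q -> core i `<=` ball (z i) e.
Proof.
move=> [_ _ _ _ /(_ i)[_ czi]] u /interior_subset cu.
have -> : e = e / 3 + (e / 3 + e / 3) by lra.
exact: ball_triangle (ball_sym czi) cu.
Qed.

Lemma fits_core_sub z q : fits_skeleton z q -> V `<=` q.2.
Proof.
move=> fit u [i _ /(fits_core_ball fit) ziu]; have [_ -> _ [zballs _] _] := fit.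
exact: zballs (imageT z i) _ ziu.
Qed.

Lemma fits_pieces_separated z q : fits_skeleton z q ->
  forall i i', i != i' -> forall u v, piece i u -> piece i' v -> ~ G u v.
Proof.
move=> fit i i' ii' u v /piece_sub_core/(fits_core_ball fit) ziu.
move=> /piece_sub_core/(fits_core_ball fit) zi'v.
have [_ -> zinj [_ zsep] _] := fit.
apply: zsep ziu zi'v; [exact: imageT|exact: imageT|].
by move=> /zinj /eqP; exact/negP.
Qed.

Lemma skeleton_bound (Rn : nat -> nat -> set X * set X -> Prop) :
  real_name (PG_cond G) (@PG_le X) Rn ->
  exists g : nat -> nat, forall z q y m, fits_skeleton z q ->
    forces_le (PG_cond G) (@PG_le X) Rn y m q -> (y m <= g m)%N.
Proof.
move=> hRn.
have [[z0 [q0 fit0]]|nofit] := pselect (exists z0 q0, fits_skeleton z0 q0); last first.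
  by exists (fun=> 0%N) => z q y m fit; exfalso; apply: nofit; exists z, q.
have piece_sub_V i : piece i `<=` V by move=> u /piece_sub_core; exists i.
have /choice[g gP] := fun m => decide_uniformly Gsym Girr Gcl piece_compact
  piece_anticlique (fits_pieces_separated fit0)
  (bigcup_open (fun i _ => @open_interior _ _)) piece_sub_V m hRn.
exists g => z q y m fit yq; have [Pq q1z _ _ zC] := fit.
have zpiece i : piece i (z i).
  by have [Czi czi] := zC i; split; last exact: subset_closed_ball.
have [d [Pd [[k' k'g Rd] [dV zd]]]] := gP m z zpiece; rewrite -q1z in zd.
have [r [Pr [rd rq]]] := PG_amalgamate Pd Pq zd (subset_trans dV (fits_core_sub fit)).
exact: leq_trans (forces_le_decided hRn Pr rd rq Rd yq) k'g.
Qed.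

End SkeletonBound.

Section Coding.
Local Open Scope ring_scope.
Variables (R : realType) (X : pseudoMetricType R) (G : X -> X -> Prop).
Hypotheses (Gsym : forall x y, G x y -> G y x) (Girr : forall x, ~ G x x)
  (Gcl : closed_graph G).
Variables (Rn : nat -> nat -> set X * set X -> Prop) (B : set (nat -> nat)) (x0 : X).
Hypothesis hRn : real_name (PG_cond G) (@PG_le X) Rn.
Variables (q : (nat -> nat) -> set X * set X) (N : (nat -> nat) -> nat)
  (s : (nat -> nat) -> seq X) (Cv : nat -> nat -> set X) (cs : nat -> seq X).
Hypotheses
  (qP : forall y, B y -> PG_cond G (q y) /\
     forall m, (N y <= m)%N -> forces_le (PG_cond G) (@PG_le X) Rn y m (q y))
  (sP : forall y, B y -> uniq (s y) /\ (q y).1 = [set` s y])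
  (CvP : forall i k, compact (Cv i k) /\ anticlique G (Cv i k))
  (Cv_cover : forall i y, B y -> exists k, Cv i k (nth x0 (s y) i))
  (cs_cover : forall n x, exists2 c, c \in cs n & ball c (n.+1%:R^-1 / 3) x).

Definition code_centers n (l : seq (nat * nat)) (i : 'I_(size l)) :=
  nth x0 (cs n) (nth (0, 0)%N l i).1.

Definition code_pieces (l : seq (nat * nat)) (i : 'I_(size l)) :=
  Cv i (nth (0, 0)%N l i).2.

(* A code (n, l) fixes the radius 1/(n+1) and, for the i-th point of the
   anticlique of q y, the index in cs n of a center within a third of that
   radius and the index k of a piece Cv i k containing the point. *)
Definition code_fits (y : nat -> nat) (code : nat * seq (nat * nat)) :=
  let: (n, l) := code in
  B y /\ fits_skeleton G n.+1%:R^-1 (@code_centers n l) (@code_pieces l)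
    (fun i : 'I_(size l) => nth x0 (s y) i) (q y).

Lemma code_exists y : B y -> exists code, code_fits y code.
Proof.
move=> By; have [Pq _] := qP By; have [us qs] := sP By.
have [n _ /(_ n (leqnn n)) qspread] := PG_cond_spread Gcl Pq.
have center_and_piece i : (i < size (s y))%N -> exists tk : nat * nat,
    ball (nth x0 (cs n) tk.1) (n.+1%:R^-1 / 3) (nth x0 (s y) i) /\
    Cv i tk.2 (nth x0 (s y) i).
  move=> _; have [c cn cy] := cs_cover n (nth x0 (s y) i).
  have [k Cvk] := Cv_cover i By.
  by exists (index c (cs n), k); rewrite /= nth_index.
have [l sl lP] := exists_seq_nth (0, 0)%N center_and_piece.
exists (n, l); split => //; split => //.
- by rewrite qs range_nth.
- exact: injective_nth.
- by move=> i; have /lP[] : (i < size (s y))%N by rewrite -sl.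
Qed.

Lemma code_bounded code : exists g, forall y, code_fits y code -> le_star y g.
Proof.
case: code => n l.
have e0 : 0 < n.+1%:R^-1 :> R by rewrite invr_gt0.
have [g gP] := skeleton_bound Gsym Girr Gcl (@code_centers n l) (C := @code_pieces l)
  e0 (fun i => (CvP _ _).1) (fun i => (CvP _ _).2) hRn.
exists g => y [By fit]; exists (N y) => m Nm.
exact: gP fit ((qP By).2 m Nm).
Qed.

End Coding.

(* Over the empty space all conditions are compatible, so the values decided
   below p form a ground-model real that the name cannot dominate. *)
Lemma dominating_name_space_nonempty (X : topologicalType) (G : X -> X -> Prop)
    (Rn : nat -> nat -> set X * set X -> Prop) (p : set X * set X) :
  real_name (PG_cond G) (@PG_le X) Rn -> PG_cond G p ->
  forces_dominating (PG_cond G) (@PG_le X) Rn p -> [set: X] !=set0.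
Proof.
move=> hRn Pp pdom; apply: contrapT => X0.
have [_ [_ Rdense]] := hRn.
have /choice[f fP] m : exists kr : nat * (set X * set X), PG_cond G kr.2 /\ Rn m kr.1 kr.2.
  have [r [Pr [_ [_ [k Rk]]]]] := Rdense m p Pp p Pp (PG_le_refl p).
  by exists (k, r).
have [q [Pq [_ [n qn]]]] := pdom (fun m => (f m).1.+1) p Pp (PG_le_refl p).
have [_ Rfn] := fP n.
have q_fn : PG_le q (f n).2 by split => x _; exfalso; apply: X0; exists x.
have := forces_le_decided hRn Pq q_fn (PG_le_refl q) Rfn (qn n (leqnn n)).
by rewrite ltnn.
Qed.

Section Dominating.
Local Open Scope ring_scope.
Variables (R : realType) (X : pseudoMetricType R) (G : X -> X -> Prop).
Hypotheses (Gsym : forall x y, G x y -> G y x) (Girr : forall x, ~ G x x)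
  (Gcl : closed_graph G) (Xcompact : compact [set: X]).
Variables (B : set (nat -> nat)) (Rn : nat -> nat -> set X * set X -> Prop)
  (p : set X * set X).
Hypotheses (Bunb : unbounded_family B)
  (Bcov : forall A : set X, card_le A B -> sigma_compact_anticlique_covered G A)
  (hRn : real_name (PG_cond G) (@PG_le X) Rn) (Pp : PG_cond G p)
  (pdom : forces_dominating (PG_cond G) (@PG_le X) Rn p).

Lemma dominating_name_absurd (x0 : X) : False.
Proof.
have /choice[w wP] y : exists w : (set X * set X) * nat * seq X,
    (B y -> PG_cond G w.1.1 /\
       forall m, (w.1.2 <= m)%N -> forces_le (PG_cond G) (@PG_le X) Rn y m w.1.1) /\
    (B y -> uniq w.2 /\ w.1.1.1 = [set` w.2]).
  have [q [Pq [_ [N qN]]]] := pdom y Pp (PG_le_refl p).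
  have [sq qs] := (finite_seqP _).1 Pq.1.
  exists (q, N, undup sq); split => // _; split; first exact: undup_uniq.
  by rewrite qs; apply/seteqP; split => x /=; rewrite mem_undup.
pose q y := (w y).1.1; pose N y := (w y).1.2; pose s y := (w y).2.
have /choice[Cv CvP] i : exists C : nat -> set X,
    (forall k, compact (C k) /\ anticlique G (C k)) /\
    (fun y => nth x0 (s y) i) @` B `<=` \bigcup_k C k.
  by apply: Bcov; exact: card_image_le.
have Cv_cover i y : B y -> exists k, Cv i k (nth x0 (s y) i).
  by move=> By; have [k _ Ck] := (CvP i).2 _ (imageP _ By); exists k.
have /choice[cs cs_cover] n : exists cs : seq X,
    forall x, exists2 c, c \in cs & ball c (n.+1%:R^-1 / 3) x.
  by apply: compact_finite_ball_cover Xcompact; rewrite divr_gt0 ?invr_gt0.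
have qP y : B y -> PG_cond G (q y) /\
    forall m, (N y <= m)%N -> forces_le (PG_cond G) (@PG_le X) Rn y m (q y).
  exact: (wP y).1.
have sP y : B y -> uniq (s y) /\ (q y).1 = [set` s y] by exact: (wP y).2.
apply: Bunb; apply: (le_star_bounded_countable_union (fits := code_fits G B x0 q s Cv cs)).
  by move=> y By; exact (code_exists Gcl qP sP Cv_cover cs_cover By).
exact (code_bounded Gsym Girr Gcl x0 hRn s cs qP (fun i k => (CvP i).1 k)).
Qed.

End Dominating.

Theorem theorem2p3 (R : realType) (X : pseudoMetricType R)
  (G : X -> X -> Prop) :
  hausdorff_space X -> compact [set: X] ->
  is_graph G -> closed_graph G ->
  b_lt_kappa G ->
  adds_no_dominating_reals (PG_cond G) (@PG_le X).
Proof.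
move=> _ Xcompact [Gsym Girr] Gcl [B [Bunb Bcov]] [Rn [hRn [p [Pp pdom]]]].
have [x0 _] := dominating_name_space_nonempty hRn Pp pdom.
exact (dominating_name_absurd Gsym Girr Gcl Xcompact Bunb Bcov hRn Pp pdom x0).
Qed.
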